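(* Let $K$ be a Kleene algebra and $u,x,v\in K$. If $y\ge (x+uyv)^*$ has a least solution $N$ in $K$, then $N=(x+uNv)^*$ and $N$ is the least solution of $y\ge 1+x+uyv+yy$. If $y\ge 1+x+uyv+yy$ has a least solution $D$ in $K$, then $D=1+x+uDv+DD$ and $D$ is the least solution of $y\ge (x+uyv)^*$.
   Context: A Kleene algebra is an idempotent semiring $(K,+,\cdot,0,1)$ with a unary operation $^*$ such that for all $a,b$: $aa^*+1\le a^*$, $a^*a+1\le a^*$, and for all $x$, $ax+b\le x$ implies $a^*b\le x$, and $xa+b\le x$ implies $ba^*\le x$; here $a\le b$ iff $a+b=b$. *)

Record KleeneAlgebra := {
  carrier :> Type;
  kplus : carrier -> carrier -> carrier;
  kmul : carrier -> carrier -> carrier;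
  kzero : carrier;
  kone : carrier;
  kstar : carrier -> carrier;
  kplus_assoc : forall a b c, kplus a (kplus b c) = kplus (kplus a b) c;
  kplus_comm : forall a b, kplus a b = kplus b a;
  kplus_zero_l : forall a, kplus kzero a = a;
  kplus_idem : forall a, kplus a a = a;
  kmul_assoc : forall a b c, kmul a (kmul b c) = kmul (kmul a b) c;
  kmul_one_l : forall a, kmul kone a = a;
  kmul_one_r : forall a, kmul a kone = a;
  kmul_distr_l : forall a b c, kmul a (kplus b c) = kplus (kmul a b) (kmul a c);
  kmul_distr_r : forall a b c, kmul (kplus a b) c = kplus (kmul a c) (kmul b c);
  kmul_zero_l : forall a, kmul kzero a = kzero;
  kmul_zero_r : forall a, kmul a kzero = kzero;
  (* star axioms, with a <= b := a + b = b *)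
  kstar_unfold_l : forall a, kplus (kplus (kmul a (kstar a)) kone) (kstar a) = kstar a;
  kstar_unfold_r : forall a, kplus (kplus (kmul (kstar a) a) kone) (kstar a) = kstar a;
  kstar_ind_l : forall a b x,
      kplus (kplus (kmul a x) b) x = x -> kplus (kmul (kstar a) b) x = x;
  kstar_ind_r : forall a b x,
      kplus (kplus (kmul x a) b) x = x -> kplus (kmul b (kstar a)) x = x
}.

Arguments kplus {k}.
Arguments kmul {k}.
Arguments kzero {k}.
Arguments kone {k}.
Arguments kstar {k}.

Definition kle {K : KleeneAlgebra} (a b : K) : Prop := kplus a b = b.

Definition least_solution {K : KleeneAlgebra} (f : K -> K) (s : K) : Prop :=
  kle (f s) s /\ forall y : K, kle (f y) y -> kle s y.

From Stdlib Require Import Setoid.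

(* Both inequations have the same pre-fixed points up to one application of
   y |-> (x + u y v)^*: every y >= 1 + x + u y v + y y is reflexive, transitive
   and above x + u y v, hence above (x + u y v)^*; conversely, if
   y >= (x + u y v)^* then a := (x + u y v)^* is itself a solution of
   a >= 1 + x + u a v + a a, since a a <= a and u a v <= u y v <= a.  So the two
   least solutions coincide, and a least pre-fixed point of a monotone map is a
   fixed point. *)

Section KleeneOrder.
Variable K : KleeneAlgebra.
Implicit Types a b c d y : K.

Lemma kle_refl a : kle a a.
Proof. apply kplus_idem. Qed.

Lemma kle_trans a b c : kle a b -> kle b c -> kle a c.
Proof. unfold kle; intros Hab Hbc. rewrite <- Hbc, kplus_assoc, Hab; reflexivity. Qed.

Lemma kle_antisym a b : kle a b -> kle b a -> a = b.
Proof. unfold kle; intros Hab Hba. rewrite <- Hab, <- Hba at 1. apply kplus_comm. Qed.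

Lemma kplus_lub a b c : kle a c -> kle b c -> kle (kplus a b) c.
Proof. unfold kle; intros Hac Hbc. rewrite <- kplus_assoc, Hbc, Hac; reflexivity. Qed.

Lemma kle_plus_l a b : kle a (kplus a b).
Proof. unfold kle. rewrite kplus_assoc, kplus_idem; reflexivity. Qed.

Lemma kle_plus_r a b : kle b (kplus a b).
Proof. rewrite kplus_comm. apply kle_plus_l. Qed.

Lemma kplus_le_l a b c : kle (kplus a b) c -> kle a c.
Proof. intro H. exact (kle_trans _ _ _ (kle_plus_l a b) H). Qed.

Lemma kplus_le_r a b c : kle (kplus a b) c -> kle b c.
Proof. intro H. exact (kle_trans _ _ _ (kle_plus_r a b) H). Qed.

Lemma kplus_mono a b c d : kle a b -> kle c d -> kle (kplus a c) (kplus b d).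
Proof.
  intros Hab Hcd. apply kplus_lub.
  - exact (kle_trans _ _ _ Hab (kle_plus_l b d)).
  - exact (kle_trans _ _ _ Hcd (kle_plus_r b d)).
Qed.

Lemma kmul_mono_l a b c : kle a b -> kle (kmul c a) (kmul c b).
Proof. unfold kle; intro H. rewrite <- kmul_distr_l, H; reflexivity. Qed.

Lemma kmul_mono_r a b c : kle a b -> kle (kmul a c) (kmul b c).
Proof. unfold kle; intro H. rewrite <- kmul_distr_r, H; reflexivity. Qed.

Lemma kmul_mono a b c d : kle a b -> kle c d -> kle (kmul a c) (kmul b d).
Proof.
  intros Hab Hcd. apply (kle_trans _ (kmul b c)).
  - apply kmul_mono_r, Hab.
  - apply kmul_mono_l, Hcd.
Qed.

Lemma kmul_kstar_le a : kle (kmul a (kstar a)) (kstar a).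
Proof. exact (kplus_le_l _ _ _ (kstar_unfold_l K a)). Qed.

Lemma kone_le_kstar a : kle kone (kstar a).
Proof. exact (kplus_le_r _ _ _ (kstar_unfold_l K a)). Qed.

Lemma kle_kstar a : kle a (kstar a).
Proof.
  apply (kle_trans _ (kmul a (kstar a))); [| apply kmul_kstar_le].
  rewrite <- (kmul_one_r _ a) at 1. apply kmul_mono_l, kone_le_kstar.
Qed.

Lemma kstar_mul_kstar a : kle (kmul (kstar a) (kstar a)) (kstar a).
Proof. apply kstar_ind_l, kplus_lub; [apply kmul_kstar_le | apply kle_refl]. Qed.

Lemma kstar_least a y :
  kle kone y -> kle a y -> kle (kmul y y) y -> kle (kstar a) y.
Proof.
  intros Hone Ha Htrans. rewrite <- (kmul_one_r _ (kstar a)).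
  apply kstar_ind_l, kplus_lub; [| exact Hone].
  exact (kle_trans _ _ _ (kmul_mono_r _ _ y Ha) Htrans).
Qed.

Lemma kstar_mono a b : kle a b -> kle (kstar a) (kstar b).
Proof.
  intro Hab. apply kstar_least.
  - apply kone_le_kstar.
  - exact (kle_trans _ _ _ Hab (kle_kstar b)).
  - apply kstar_mul_kstar.
Qed.

Definition kmonotone (F : K -> K) : Prop := forall a b, kle a b -> kle (F a) (F b).

Lemma least_solution_fixpoint (F : K -> K) s :
  kmonotone F -> least_solution F s -> s = F s.
Proof.
  intros Hmono [Hpre Hleast]. apply kle_antisym; [| exact Hpre].
  apply Hleast, Hmono, Hpre.
Qed.

Section LeastSolutionTransfer.
Variables F G : K -> K.
Hypothesis solution_G_F : forall y, kle (G y) y -> kle (F y) y.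
Hypothesis solution_F_G : forall y, kle (F y) y -> kle (G (F y)) (F y).

Lemma least_solution_transfer_FG s :
  kmonotone F -> least_solution F s -> least_solution G s.
Proof.
  intros Hmono Hs. pose proof (least_solution_fixpoint F s Hmono Hs) as Hfix.
  split.
  - rewrite Hfix. apply solution_F_G, (proj1 Hs).
  - intros y Hy. apply (proj2 Hs), solution_G_F, Hy.
Qed.

Lemma least_solution_transfer_GF s : least_solution G s -> least_solution F s.
Proof.
  intros [Hpre Hleast]. split.
  - apply solution_G_F, Hpre.
  - intros y Hy. exact (kle_trans _ _ _ (Hleast _ (solution_F_G y Hy)) Hy).
Qed.

End LeastSolutionTransfer.

Section StarAndQuadratic.
Variables u x v : K.

Definition star_rhs y := kstar (kplus x (kmul u (kmul y v))).
Definition quadratic_rhs y :=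
  kplus (kplus (kplus kone x) (kmul u (kmul y v))) (kmul y y).

Lemma star_rhs_mono : kmonotone star_rhs.
Proof.
  intros y z Hyz. apply kstar_mono, kplus_mono; [apply kle_refl |].
  apply kmul_mono_l, kmul_mono_r, Hyz.
Qed.

Lemma quadratic_rhs_mono : kmonotone quadratic_rhs.
Proof.
  intros y z Hyz. apply kplus_mono; [apply kplus_mono |].
  - apply kle_refl.
  - apply kmul_mono_l, kmul_mono_r, Hyz.
  - apply kmul_mono; exact Hyz.
Qed.

Lemma quadratic_solution_star_solution y :
  kle (quadratic_rhs y) y -> kle (star_rhs y) y.
Proof.
  intro Hy. apply kstar_least.
  - exact (kplus_le_l _ _ _ (kplus_le_l _ _ _ (kplus_le_l _ _ _ Hy))).
  - apply kplus_lub.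
    + exact (kplus_le_r _ _ _ (kplus_le_l _ _ _ (kplus_le_l _ _ _ Hy))).
    + exact (kplus_le_r _ _ _ (kplus_le_l _ _ _ Hy)).
  - exact (kplus_le_r _ _ _ Hy).
Qed.

Lemma star_solution_quadratic_solution y :
  kle (star_rhs y) y -> kle (quadratic_rhs (star_rhs y)) (star_rhs y).
Proof.
  intro Hy. unfold quadratic_rhs at 1.
  apply kplus_lub; [apply kplus_lub; [apply kplus_lub |] |].
  - apply kone_le_kstar.
  - exact (kle_trans _ _ _ (kle_plus_l x _) (kle_kstar _)).
  - apply (kle_trans _ (kmul u (kmul y v))).
    + apply kmul_mono_l, kmul_mono_r, Hy.
    + exact (kle_trans _ _ _ (kle_plus_r x _) (kle_kstar _)).
  - apply kstar_mul_kstar.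
Qed.

End StarAndQuadratic.

End KleeneOrder.

Theorem proposition5 (K : KleeneAlgebra) (u x v : K) :
  (forall N : K,
     least_solution (fun y => kstar (kplus x (kmul u (kmul y v)))) N ->
     N = kstar (kplus x (kmul u (kmul N v))) /\
     least_solution
       (fun y => kplus (kplus (kplus kone x) (kmul u (kmul y v))) (kmul y y)) N)
  /\
  (forall D : K,
     least_solution
       (fun y => kplus (kplus (kplus kone x) (kmul u (kmul y v))) (kmul y y)) D ->
     D = kplus (kplus (kplus kone x) (kmul u (kmul D v))) (kmul D D) /\
     least_solution (fun y => kstar (kplus x (kmul u (kmul y v)))) D).
Proof.
  pose proof (quadratic_solution_star_solution K u x v) as solution_G_F.
  pose proof (star_solution_quadratic_solution K u x v) as solution_F_G.
  split.
  - intros N HN. split.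
    + exact (least_solution_fixpoint K _ N (star_rhs_mono K u x v) HN).
    + exact (least_solution_transfer_FG K _ _ solution_G_F solution_F_G N
               (star_rhs_mono K u x v) HN).
  - intros D HD. split.
    + exact (least_solution_fixpoint K _ D (quadratic_rhs_mono K u x v) HD).
    + exact (least_solution_transfer_GF K _ _ solution_G_F solution_F_G D HD).
Qed.
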